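(* Let $p(n,k)$ be the number of partitions of the integer $n$ into exactly $k$ positive parts and $q(n,k)$ the number of partitions of $n$ into exactly $k$ pairwise distinct positive parts. Let $(n_m,k_m)_{m\ge1}$ be a sequence of pairs of integers with $k_m\ge 2$ and $n_m\ge k_m$. If $n_m/k_m^3\to\infty$ then $q(n_m,k_m)/p(n_m,k_m)\to 1$; if $n_m/k_m^3\to 0$ then $q(n_m,k_m)/p(n_m,k_m)\to 0$. Equivalently, the probability that a uniformly random partition of $n_m$ into $k_m$ positive parts has two equal parts tends to $0$ in the first case and to $1$ in the second.
   Context: A partition of $n$ into $k$ positive parts is a multiset of $k$ positive integers with sum $n$ (equivalently a sequence $1\le x_1\le\dots\le x_k$ with $\sum x_i=n$). *)

From mathcomp Require Import all_boot.
Set Implicit Arguments. Unset Strict Implicit. Unset Printing Implicit Defensive.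

(* Every part is <= n,
   so such sequences are exactly the k-tuples over 'I_n.+1 satisfying
   the conditions below; this gives a finite type to count over. *)

Definition is_partition (n k : nat) (s : seq nat) : bool :=
  [&& size s == k, all (fun x => 0 < x) s, sorted leq s & sumn s == n].

Definition is_distinct_partition (n k : nat) (s : seq nat) : bool :=
  [&& size s == k, all (fun x => 0 < x) s, sorted ltn s & sumn s == n].

Definition p_part (n k : nat) : nat :=
  #|[set t : k.-tuple 'I_n.+1 | is_partition n k (map val t)]|.

Definition q_part (n k : nat) : nat :=
  #|[set t : k.-tuple 'I_n.+1 | is_distinct_partition n k (map val t)]|.

From Pilot Require Import Defs.
From Stdlib Require Import Reals Lra.
From mathcomp Require all_boot zify.

(* Write P_k(m) for the number of partitions of m into at most k parts
   ([pleq k m]) and C = binom(k, 2).  Subtracting 1 from every part, resp.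
   i from the i-th smallest part of a partition into distinct parts, gives
     p(n, k) = P_k(n - k)   and   q(n, k) = P_k(n - k - C).
   Adding up the sizes of all parts of all partitions of N into parts of
   size <= k (the conjugate description of P_k), and comparing with the
   partial sums S(N) = P_k(0) + ... + P_k(N - 1) of the nondecreasing
   sequence P_k, yields
     N P_k(N) <= k S(N) <= (N + C) P_k(N).
   Isolating the last C terms P_k(N - C), ..., P_k(N - 1) of S(N) gives
     N (P_k(N) - P_k(N - C)) <= k C P_k(N)  and  k C P_k(N - C) <= (N + C) P_k(N),
   i.e. 1 - q/p <= k^3 / n once n >= 2 k^3, and q/p <= 4 (n / k^3 + 1/k)
   always.  As 1/k <= sqrt (n / k^3), both bounds tend to 0 in the
   respective regimes, which is the theorem. *)

Module PartitionCounting.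
Import all_boot zify.
Local Set Implicit Arguments. Local Unset Strict Implicit. Local Unset Printing Implicit Defensive.

(* [chains r k n lo] counts the sequences x_1, ..., x_k of naturals with
   sum n such that lo, x_1, ..., x_k is an r-chain. *)
Fixpoint chains (r : rel nat) (k n lo : nat) : nat :=
  if k is k'.+1 then \sum_(0 <= x < n.+1 | r lo x) chains r k' (n - x) x
  else n == 0.

Lemma sum_tuple_cons n k (F : seq nat -> nat) :
  \sum_(t : k.+1.-tuple 'I_n.+1) F (map val t) =
  \sum_(x : 'I_n.+1) \sum_(t : k.-tuple 'I_n.+1) F (val x :: map val t).
Proof.
rewrite pair_big /=.
rewrite (reindex (fun p : 'I_n.+1 * k.-tuple 'I_n.+1 => [tuple of p.1 :: p.2])) //=.
apply: onW_bij; exists (fun t => (thead t, [tuple of behead t])).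
  by case=> x t /=; congr pair; apply: val_inj.
by move=> t; rewrite [in RHS](tuple_eta t).
Qed.

Lemma sum_tuple0 n (F : seq nat -> nat) :
  \sum_(t : 0.-tuple 'I_n.+1) F (map val t) = F [::].
Proof. by rewrite (big_pred1 [tuple]) // => t; apply/esym/eqP; apply: tuple0. Qed.

(* The tuples over 'I_n.+1 forming an r-chain from lo with sum n' <= n
   are counted by [chains]: parts of such a tuple never exceed n. *)
Lemma count_chains (r : rel nat) n k : forall n' lo, n' <= n ->
  \sum_(t : k.-tuple 'I_n.+1) (path r lo (map val t) && (sumn (map val t) == n') : nat)
  = chains r k n' lo.
Proof.
elim: k => [|k IH] n' lo hn.
  by rewrite (sum_tuple0 _ (fun s => nat_of_bool (path r lo s && (sumn s == n')))) /= eq_sym.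
rewrite (sum_tuple_cons _ _ (fun s => nat_of_bool (path r lo s && (sumn s == n')))) /=.
rewrite (@big_nat_widen _ _ _ 0 n'.+1 n.+1) // big_mkord [RHS]big_mkcond /=.
apply: eq_bigr => x _; case: ifP => [/andP[rx xn]|hx].
  rewrite -IH; last by lia.
  apply: eq_bigr => t _; rewrite rx /=; congr (nat_of_bool (_ && _)).
  by apply/eqP/eqP; lia.
apply: big1 => t _; case: (boolP (r lo x)) hx => //= _ hx.
by case: eqP => [|//]; lia.
Qed.

Lemma card_set_sum (T : finType) (Q : pred T) : #|[set t | Q t]| = \sum_t (Q t : nat).
Proof. by rewrite -sum1dep_card big_mkcond; apply: eq_bigr => t _; case: (Q t). Qed.

Lemma p_part_chains n k : Defs.p_part n k = chains leq k n 1.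
Proof.
rewrite /Defs.p_part card_set_sum -(@count_chains leq n k n 1 (leqnn n)).
apply: eq_bigr => t _; congr nat_of_bool.
by rewrite /is_partition size_map size_tuple eqxx (path_sortedE leq_trans) -[RHS]andbA.
Qed.

Lemma q_part_chains n k : Defs.q_part n k = chains ltn k n 0.
Proof.
rewrite /Defs.q_part card_set_sum -(@count_chains ltn n k n 0 (leqnn n)).
apply: eq_bigr => t _; congr nat_of_bool.
by rewrite /is_distinct_partition size_map size_tuple eqxx (path_sortedE ltn_trans) -[RHS]andbA.
Qed.

(* Partitions of n into exactly k parts, all of them >= lo. *)
Definition nparts (k n lo : nat) : nat := chains leq k n lo.

Lemma sum_from lo m (F : nat -> nat) :
  \sum_(0 <= x < m | lo <= x) F x = \sum_(lo <= x < m) F x.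
Proof. by rewrite (@big_nat_widenl _ _ _ lo 0). Qed.

Lemma nparts_S k n lo : nparts k.+1 n lo = \sum_(lo <= x < n.+1) nparts k (n - x) x.
Proof. exact: sum_from. Qed.

Lemma chains_ltn_S k n lo :
  chains ltn k.+1 n lo = \sum_(lo.+1 <= x < n.+1) chains ltn k (n - x) x.
Proof. exact: sum_from. Qed.

Lemma sum_narrow (F : nat -> nat) a b c :
  (forall x, b <= x -> x < c -> F x = 0) -> b <= c ->
  \sum_(a <= x < c) F x = \sum_(a <= x < b) F x.
Proof.
move=> F0 bc; case: (leqP a b) => ab.
  rewrite (big_cat_nat ab bc) /= [X in _ + X]big1_seq ?addn0 //.
  by move=> i /andP[_]; rewrite mem_index_iota => /andP[]; apply: F0.
rewrite [RHS]big_geq ?(ltnW ab) //; apply: big1_seq => i /andP[_].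
by rewrite mem_index_iota => /andP[h1 h2]; apply: F0 => //; apply: leq_trans (ltnW ab) h1.
Qed.

(* k positive parts add up to at least k. *)
Lemma nparts_small k n lo : 0 < k -> 0 < lo -> n < k -> nparts k n lo = 0.
Proof.
elim: k n lo => // k IH n lo _ lo0 nk; rewrite nparts_S.
apply: big1_seq => x /andP[_]; rewrite mem_index_iota => /andP[h1 h2].
by case: k IH nk => [|k] IH nk; [lia | apply: IH; lia].
Qed.

(* Either the smallest part equals lo, or all parts are >= lo + 1. *)
Lemma nparts_split k n lo :
  nparts k.+1 n lo = (if lo <= n then nparts k (n - lo) lo else 0) + nparts k.+1 n lo.+1.
Proof.
rewrite !nparts_S; case: ifP => h; first by rewrite big_ltn.
by rewrite !big_geq //; lia.
Qed.

(* Subtracting 1 from each of the k parts. *)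
Lemma nparts_shift k n lo : 0 < lo -> nparts k n lo.+1 = nparts k (n - k) lo.
Proof.
elim: k n lo => [|k IH] n lo lo0; first by rewrite subn0.
rewrite !nparts_S; case: n => [|n]; first by rewrite !big_geq.
rewrite -(addn1 lo) big_addn.
rewrite (@eq_big_nat _ _ _ _ _ _ (fun i => nparts k (n.+1 - (i + 1) - k) i)); last first.
  by move=> i /andP[h1 h2]; rewrite [in X in nparts k _ X]addn1 IH //; apply: leq_trans lo0 h1.
rewrite (@sum_narrow _ _ (n.+1 - k.+1).+1); first by apply: eq_bigr => x _; congr nparts; lia.
  by move=> x h1 h2; case: k IH h1 => [|k] IH h1; [lia | apply: nparts_small; lia].
by lia.
Qed.

(* Strictly increasing parts x_1 < ... < x_k correspond to weakly increasing
   parts x_i - (i - 1), which lowers the sum by 'C(k, 2). *)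
Lemma chains_ltn_nparts k n lo : chains ltn k n lo = nparts k (n - 'C(k, 2)) lo.+1.
Proof.
elim: k n lo => [|k IH] n lo; first by rewrite bin0n subn0.
rewrite chains_ltn_S binS bin1.
rewrite (@eq_big_nat _ _ _ _ _ _ (fun x => nparts k (n - 'C(k.+1, 2) - x) x)); last first.
  move=> x /andP[h1 h2]; rewrite IH nparts_shift; last by lia.
  by rewrite binS bin1; congr nparts; lia.
rewrite (@sum_narrow _ _ (n - ('C(k, 2) + k)).+1); last by lia.
  by rewrite nparts_S binS bin1.
move=> x h1 h2; case: k IH h1 h2 => [|k] IH h1 h2; first by rewrite bin0n /= in h1; lia.
by rewrite binS bin1; apply: nparts_small => //; rewrite ?binS ?bin1 in h1 *; lia.
Qed.

(* [pleq k m]: partitions of m into at most k parts, i.e. partitions of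
   m + k into exactly k parts (remove 1 from each part).  By conjugation it
   also counts partitions of m into parts of size at most k, which is the
   content of the recursion [pleq_rec]. *)
Definition pleq (k m : nat) : nat := nparts k (m + k) 1.

Lemma pleq0 m : pleq 0 m = (m == 0).
Proof. by rewrite /pleq addn0. Qed.

(* Either fewer than k+1 parts, or exactly k+1 parts each >= 1. *)
Lemma pleq_rec k m :
  pleq k.+1 m = pleq k m + (if k.+1 <= m then pleq k.+1 (m - k.+1) else 0).
Proof.
rewrite /pleq nparts_split ifT; last by lia.
have -> : m + k.+1 - 1 = m + k by lia.
rewrite [nparts k.+1 _ 2]nparts_shift // addnK; case: ifP => h; first by rewrite subnK.
by rewrite [nparts k.+1 m 1]nparts_small //; move/negbT: h; lia.
Qed.

Lemma nparts_pleq k n : nparts k n 1 = if k <= n then pleq k (n - k) else 0.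
Proof.
case: ifP => h; first by rewrite /pleq subnK.
by case: k h => [|k] h //; rewrite nparts_small //; move/negbT: h; lia.
Qed.

Lemma p_part_pleq n k : k <= n -> Defs.p_part n k = pleq k (n - k).
Proof. by move=> h; rewrite p_part_chains -/(nparts k n 1) nparts_pleq h. Qed.

Lemma q_part_pleq n k :
  Defs.q_part n k = if k <= n - 'C(k, 2) then pleq k (n - 'C(k, 2) - k) else 0.
Proof. by rewrite q_part_chains chains_ltn_nparts nparts_pleq. Qed.

Lemma pleq_at0 k : pleq k 0 = 1.
Proof. by elim: k => [|k IH]; rewrite ?pleq0 // pleq_rec IH. Qed.

Lemma pleq1 m : pleq 1 m = 1.
Proof. by elim: m => [|m IH]; rewrite pleq_rec pleq0 //= subn1 IH. Qed.

(* For k > 0, adding a part 1 maps partitions of m injectively into those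
   of m + 1, so [pleq k] is nondecreasing. *)
Lemma pleq_succ k m : 0 < k -> pleq k m <= pleq k m.+1.
Proof.
case: k => // k _; elim: k m => [|k IHk] m; first by rewrite !pleq1.
elim/ltn_ind: m => m IHm.
rewrite pleq_rec [pleq k.+2 m.+1]pleq_rec leq_add ?IHk //.
case: ifP => h1; case: ifP => h2 //; try lia.
have -> : m.+1 - k.+2 = (m - k.+2).+1 by lia.
apply: IHm; lia.
Qed.

Lemma pleq_le k i j : 0 < k -> i <= j -> pleq k i <= pleq k j.
Proof.
move=> k0 /subnK <-; elim: (j - i) => [|d IH] //.
by rewrite addSn; apply: leq_trans IH (pleq_succ _ k0).
Qed.

Lemma pleq_pos k m : 0 < k -> 0 < pleq k m.
Proof. by move=> k0; rewrite -(pleq_at0 k); apply: pleq_le. Qed.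

Lemma pleq_sum_bounds k a b : 0 < k ->
  (b - a) * pleq k a <= \sum_(a <= j < b) pleq k j <= (b - a) * pleq k b.
Proof.
move=> k0; rewrite -!sum_nat_const_nat; apply/andP; split;
  rewrite big_nat_cond [X in _ <= X]big_nat_cond;
  by apply: leq_sum => j /andP[/andP[h1 h2] _]; apply: pleq_le => //; lia.
Qed.

(* For 1 <= v <= k, [mult_total k v m] is the total number of parts equal
   to v over all partitions of m into parts of size <= k: the partitions
   having at least l parts v are in bijection with those of m - v * l. *)
Definition mult_total (k v m : nat) : nat :=
  \sum_(1 <= l < (m %/ v).+1) pleq k (m - v * l).

Lemma mult_total_small k v m : m < v -> mult_total k v m = 0.
Proof. by move=> h; rewrite /mult_total divn_small // big_geq. Qed.

Lemma mult_total_step k v m : 0 < v -> v <= m ->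
  mult_total k v m = pleq k (m - v) + mult_total k v (m - v).
Proof.
move=> v0 vm; rewrite /mult_total.
have -> : m %/ v = ((m - v) %/ v).+1.
  by rewrite -{1}(subnK vm) divnDr ?dvdnn // divnn v0 addn1.
rewrite big_nat_recl // muln1; congr addn.
by apply: eq_bigr => l _; congr pleq; rewrite mulnS; lia.
Qed.

(* [pleq_rec], summed over the shifted arguments m - v * l. *)
Lemma mult_total_rec k v m : 0 < v -> mult_total k.+1 v m =
  mult_total k v m + (if k.+1 <= m then mult_total k.+1 v (m - k.+1) else 0).
Proof.
move=> v0; rewrite /mult_total.
rewrite (eq_bigr (fun l => pleq k (m - v * l) +
   (if k.+1 <= m - v * l then pleq k.+1 (m - k.+1 - v * l) else 0))); last first.
  by move=> l _; rewrite pleq_rec; case: ifP => // _; do 2 f_equal; lia.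
rewrite big_split /=; congr addn; case: ifP => h; last first.
  by apply: big1 => l _; rewrite ifF //; move/negbT: h; lia.
rewrite (@sum_narrow _ _ ((m - k.+1) %/ v).+1); last first.
- by rewrite ltnS leq_div2r // leq_subr.
- move=> l h1 h2; case: ifP => // h3; exfalso.
  have : l <= (m - k.+1) %/ v by rewrite leq_divRL //; lia.
  by lia.
apply: eq_big_nat => l /andP[h1 h2]; rewrite ifT //.
by move: h2; rewrite ltnS leq_divRL // => h2; lia.
Qed.

(* Summing the sizes of all parts of all partitions of m into parts <= k
   gives m times their number. *)
Lemma sum_of_parts k m : m * pleq k m = \sum_(1 <= v < k.+1) v * mult_total k v m.
Proof.
elim: k m => [|k IHk] m.
  by rewrite pleq0 big_geq //; case: m => // m; rewrite muln0.
elim/ltn_ind: m => m IHm.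
rewrite big_nat_recr //=.
rewrite (@eq_big_nat _ _ _ _ _ _ (fun v => v * mult_total k v m +
   (if k.+1 <= m then v * mult_total k.+1 v (m - k.+1) else 0))); last first.
  move=> v /andP[h1 _]; rewrite mult_total_rec //.
  by case: ifP => _; rewrite ?mulnDr ?muln0 ?addn0.
rewrite big_split /= -IHk pleq_rec mulnDr.
case: ifP => h; last by rewrite big1 ?addn0 ?mult_total_small ?muln0 //; move/negbT: h; lia.
rewrite mult_total_step // -addnA; congr addn.
have := IHm (m - k.+1) ltac:(lia); rewrite big_nat_recr //= => E.
by rewrite -{1}(subnK h) mulnDl E mulnDr; lia.
Qed.

Definition pleq_cum (k N : nat) : nat := \sum_(0 <= j < N) pleq k j.

Lemma pleq_cum_split k a N : a <= N ->
  pleq_cum k N = pleq_cum k a + \sum_(a <= j < N) pleq k j.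
Proof. by move=> h; rewrite /pleq_cum (big_cat_nat (leq0n a) h). Qed.

(* Cut S(N) into blocks of v consecutive terms ending at N: by monotonicity
   the block starting at N - l v lies between v P(N - l v) and
   v P(N - (l - 1) v), which compares S(N) with v * mult_total k v N. *)
Lemma mult_total_upper k v N : 0 < k -> 0 < v -> v * mult_total k v N <= pleq_cum k N.
Proof.
move=> k0 v0; elim/ltn_ind: N => N IH.
case: (ltnP N v) => h; first by rewrite mult_total_small ?muln0.
rewrite mult_total_step // mulnDr (pleq_cum_split k (leq_subr v N)) addnC leq_add //.
  by apply: IH; lia.
have /andP[+ _] := pleq_sum_bounds (N - v) N k0.
by have -> : N - (N - v) = v by lia.
Qed.

Lemma mult_total_lower k v N : 0 < k -> 0 < v ->
  pleq_cum k N <= v * mult_total k v N + (v - 1) * pleq k N.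
Proof.
move=> k0 v0; elim/ltn_ind: N => N IH.
case: (ltnP N v) => h.
  rewrite mult_total_small // muln0 add0n.
  have /andP[_ +] := pleq_sum_bounds 0 N k0; rewrite subn0 => hS.
  by apply: leq_trans hS _; rewrite leq_mul2r; apply/orP; right; lia.
rewrite mult_total_step // (pleq_cum_split k (leq_subr v N)).
have hlow := IH (N - v) ltac:(lia).
have htail : \sum_(N - v <= j < N) pleq k j <= pleq k (N - v) + (v - 1) * pleq k N.
  rewrite big_ltn ?leq_add2l; last by lia.
  have /andP[_ +] := pleq_sum_bounds (N - v).+1 N k0.
  by have -> : N - (N - v).+1 = v - 1 by lia.
have hv : (v - 1) * pleq k (N - v) + pleq k (N - v) = v * pleq k (N - v).
  by rewrite -mulSnr; congr muln; lia.
by rewrite mulnDr; lia.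
Qed.

Lemma sum_pred_bin2 k : \sum_(1 <= v < k.+1) (v - 1) = 'C(k, 2).
Proof.
elim: k => [|k IH]; first by rewrite big_geq.
by rewrite big_nat_recr //= IH binS bin1 subn1.
Qed.

(* Summing the two previous bounds over 1 <= v <= k, with [sum_of_parts]:
   N P(N) <= k S(N) <= (N + 'C(k, 2)) P(N). *)
Lemma pleq_cum_lower k N : 0 < k -> N * pleq k N <= k * pleq_cum k N.
Proof.
move=> k0; rewrite sum_of_parts.
apply: leq_trans (_ : \sum_(1 <= v < k.+1) pleq_cum k N <= _).
  rewrite big_nat_cond [X in _ <= X]big_nat_cond.
  by apply: leq_sum => v /andP[/andP[h1 _] _]; apply: mult_total_upper.
by rewrite sum_nat_const_nat subn1.
Qed.

Lemma pleq_cum_upper k N : 0 < k -> k * pleq_cum k N <= (N + 'C(k, 2)) * pleq k N.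
Proof.
move=> k0; rewrite mulnDl sum_of_parts -sum_pred_bin2 big_distrl /= -big_split /=.
have -> : k * pleq_cum k N = \sum_(1 <= v < k.+1) pleq_cum k N.
  by rewrite sum_nat_const_nat subn1.
rewrite big_nat_cond [X in _ <= X]big_nat_cond.
by apply: leq_sum => v /andP[/andP[h1 _] _]; apply: mult_total_lower.
Qed.

(* Comparing pleq k N with pleq k (N - 'C(k, 2)) through S(N):
   N * P(N) <= k * S(N) = k * S(N - C) + k * (P(N - C) + ... + P(N - 1))
            <= N * P(N - C) + k * C * P(N). *)
Lemma pleq_defect k N : 0 < k -> 'C(k, 2) <= N ->
  N * pleq k N <= N * pleq k (N - 'C(k, 2)) + k * 'C(k, 2) * pleq k N.
Proof.
move=> k0 CN; set C := 'C(k, 2); set a := N - C.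
have aC : a + C = N by rewrite /a subnK.
have hupper := pleq_cum_upper a k0; rewrite -/C aC in hupper.
have /andP[_ htail] := pleq_sum_bounds a N k0.
have NaC : N - a = C by rewrite /a; lia.
rewrite NaC -(leq_pmul2l k0) in htail.
have := pleq_cum_lower N k0; rewrite (pleq_cum_split k (leq_subr C N)) -/a mulnDr.
by rewrite -mulnA; lia.
Qed.

(* C * P(N - C) <= P(N - C) + ... + P(N - 1) <= S(N), and k * S(N) <= (N + C) * P(N). *)
Lemma pleq_shift_lower k N : 0 < k -> 'C(k, 2) <= N ->
  k * 'C(k, 2) * pleq k (N - 'C(k, 2)) <= (N + 'C(k, 2)) * pleq k N.
Proof.
move=> k0 CN; set C := 'C(k, 2).
have /andP[htail _] := pleq_sum_bounds (N - C) N k0.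
have NC : N - (N - C) = C by lia.
rewrite NC in htail.
have := pleq_cum_upper N k0; rewrite -/C (pleq_cum_split k (leq_subr C N)) => hupper.
apply: leq_trans hupper; rewrite -mulnA leq_mul2l; apply/orP; right.
by apply: leq_trans htail _; rewrite leq_addl.
Qed.

Lemma bin2_double k : 'C(k, 2) * 2 = k * k.-1.
Proof. by elim: k => [|k IH] //; rewrite binS bin1 mulnDl IH; case: k {IH} => //= k; lia. Qed.

Lemma k_le_cube k : k <= k ^ 3.
Proof. by case: k => // k; rewrite -{1}(expn1 k.+1) leq_pexp2l. Qed.

Lemma partition_defect n k : 2 <= k -> 2 * k ^ 3 <= n ->
  Defs.q_part n k <= Defs.p_part n k /\
  n * (Defs.p_part n k - Defs.q_part n k) <= k ^ 3 * Defs.p_part n k.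
Proof.
move=> k2 kn; have hC := bin2_double k; have k3 := k_le_cube k.
have e3 : k ^ 3 = k * (k * k) by rewrite !expnS expn0 muln1.
have Ck : 'C(k, 2) * 2 <= k * k by rewrite hC leq_mul2l leq_pred orbT.
rewrite q_part_pleq p_part_pleq; last by lia.
set C := 'C(k, 2) in hC Ck *; set N := n - k.
rewrite ifT; last by nia.
have -> : n - C - k = N - C by rewrite /N; lia.
have CN : C <= N by nia.
set p := pleq k N; set q := pleq k (N - C).
have qp : q <= p by apply: pleq_le; [lia | apply: leq_subr].
split=> //.
have hd : N * (p - q) <= k * C * p.
  by have := pleq_defect (ltnW k2) CN; rewrite -/C -/p -/q mulnBr; lia.
have h2N : n * (p - q) <= 2 * (N * (p - q)) by rewrite mulnA leq_mul2r; apply/orP; right; nia.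
have hkC : 2 * (k * C * p) <= k ^ 3 * p.
  by rewrite mulnA leq_mul2r e3; apply/orP; right; nia.
by lia.
Qed.

Lemma partition_distinct_small n k : 2 <= k -> k <= n ->
  k ^ 3 * Defs.q_part n k <= 4 * (n + k ^ 2) * Defs.p_part n k.
Proof.
move=> k2 kn; have hC := bin2_double k.
rewrite q_part_pleq p_part_pleq //; case: ifP => h; last by rewrite muln0.
set C := 'C(k, 2) in hC h *; set N := n - k.
have -> : n - C - k = N - C by rewrite /N; lia.
have CN : C <= N by rewrite /N; lia.
have hs := pleq_shift_lower (ltnW k2) CN; rewrite -/C in hs.
have e4 : k ^ 3 <= 4 * (k * C) by rewrite !expnS expn0 muln1; nia.
have e5 : N + C <= n + k ^ 2 by rewrite !expnS expn0 muln1; nia.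
apply: leq_trans (_ : 4 * (k * C) * pleq k (N - C) <= _).
  by rewrite leq_mul2r e4 orbT.
rewrite -!mulnA leq_mul2l /= mulnA; apply: leq_trans hs _.
by rewrite leq_mul2r e5 orbT.
Qed.

Lemma p_part_pos n k : 0 < k -> k <= n -> 0 < Defs.p_part n k.
Proof. by move=> k0 kn; rewrite p_part_pleq // pleq_pos. Qed.

Local Open Scope R_scope.

Lemma INR_muln a b : INR (a * b) = INR a * INR b.
Proof. by rewrite -multE mult_INR. Qed.

Lemma INR_expn a e : INR (a ^ e) = INR a ^ e.
Proof. by elim: e => [|e IH] //; rewrite expnS INR_muln IH. Qed.

Lemma ratio_near_one n k : (2 <= k)%coq_nat -> 2 <= INR n / INR k ^ 3 ->
  Rabs (INR (Defs.q_part n k) / INR (Defs.p_part n k) - 1) <= / (INR n / INR k ^ 3).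
Proof.
move=> /leP k2 hx; set K := INR k in hx *; set N := INR n in hx *.
set P := INR (Defs.p_part n k); set Q := INR (Defs.q_part n k).
have K2 : 2 <= K by apply: (le_INR 2); apply/leP.
have K3 : 0 < K ^ 3 by apply: pow_lt; lra.
have hN : 2 * K ^ 3 <= N.
  rewrite (_ : N = N / K ^ 3 * K ^ 3); last by field; lra.
  by apply: Rmult_le_compat_r; lra.
have kn : (2 * k ^ 3 <= n)%N.
  by apply/leP; apply: INR_le; rewrite INR_muln INR_expn -/K -/N /=; lra.
have [qp hd] := partition_defect k2 kn.
have QP : Q <= P by apply/le_INR/leP.
have HD : N * (P - Q) <= K ^ 3 * P.
  by have := le_INR _ _ (leP hd); rewrite 2!INR_muln INR_expn -minusE minus_INR //; apply/leP.
have P0 : 0 < P by apply/lt_0_INR/ltP/p_part_pos; have := k_le_cube k; lia.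
rewrite (_ : Q / P - 1 = - ((P - Q) / P)); last by field; lra.
rewrite Rabs_Ropp Rabs_pos_eq; last by apply: Rle_mult_inv_pos; lra.
apply: (Rmult_le_reg_r (P * N)); first by nra.
rewrite (_ : (P - Q) / P * (P * N) = N * (P - Q)); last by field; lra.
by rewrite (_ : / (N / K ^ 3) * (P * N) = K ^ 3 * P); [|field; lra].
Qed.

(* [partition_distinct_small] in real form: q/p <= 4 (x + sqrt x) for
   x = n / k^3, using 1/k <= sqrt x, which holds since k <= n. *)
Lemma ratio_small n k : (2 <= k)%coq_nat -> (k <= n)%coq_nat ->
  Rabs (INR (Defs.q_part n k) / INR (Defs.p_part n k) - 0) <=
    4 * (INR n / INR k ^ 3 + sqrt (INR n / INR k ^ 3)).
Proof.
move=> /leP k2 /leP kn; set K := INR k; set N := INR n.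
set P := INR (Defs.p_part n k); set Q := INR (Defs.q_part n k).
have K2 : 2 <= K by apply: (le_INR 2); apply/leP.
have KN : K <= N by apply/le_INR/leP.
have K3 : 0 < K ^ 3 by apply: pow_lt; lra.
have HB : K ^ 3 * Q <= 4 * (N + K ^ 2) * P.
  have := le_INR _ _ (leP (partition_distinct_small k2 kn)).
  rewrite INR_muln INR_expn 2!INR_muln -plusE plus_INR INR_expn.
  by have -> : INR 4 = 4 by simpl; lra.
have P0 : 0 < P by apply/lt_0_INR/ltP/p_part_pos; lia.
have Q0 : 0 <= Q by apply: pos_INR.
have invK : / K <= sqrt (N / K ^ 3).
  rewrite -[X in X <= _](sqrt_pow2 (/ K)); last by apply/Rlt_le/Rinv_0_lt_compat; lra.
  apply: sqrt_le_1_alt; apply: (Rmult_le_reg_r (K ^ 3)) => //.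
  by rewrite (_ : (/ K) ^ 2 * K ^ 3 = K); [|field; lra]; rewrite /Rdiv Rmult_assoc Rinv_l; lra.
rewrite Rminus_0_r Rabs_pos_eq; last by apply: Rle_mult_inv_pos.
apply: Rle_trans (_ : 4 * (N / K ^ 3 + / K) <= _); last by lra.
apply: (Rmult_le_reg_r (P * K ^ 3)); first by nra.
rewrite (_ : Q / P * (P * K ^ 3) = K ^ 3 * Q); last by field; lra.
by rewrite (_ : 4 * (N / K ^ 3 + / K) * (P * K ^ 3) = 4 * (N + K ^ 2) * P); [|field; lra].
Qed.

End PartitionCounting.

Open Scope R_scope.

Lemma Un_cv_dominated (r s : nat -> R) (l : R) :
  (exists N, forall m, (N <= m)%nat -> Rabs (r m - l) <= s m) -> Un_cv s 0 -> Un_cv r l.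
Proof.
intros [N HN] Hs eps Heps.
destruct (Hs eps Heps) as [M HM].
exists (Nat.max N M); intros m Hm.
specialize (HN m (Nat.max_lub_l _ _ _ Hm)).
specialize (HM m (Nat.max_lub_r _ _ _ Hm)).
unfold R_dist in *; rewrite Rminus_0_r in HM.
pose proof (Rle_abs (s m)); lra.
Qed.

Theorem mainTheorem4 (n k : nat -> nat)
  (hk : forall m, (2 <= k m)%nat) (hn : forall m, (k m <= n m)%nat) :
  (cv_infty (fun m => INR (n m) / INR (k m) ^ 3) ->
     Un_cv (fun m => INR (q_part (n m) (k m)) / INR (p_part (n m) (k m))) 1)
  /\
  (Un_cv (fun m => INR (n m) / INR (k m) ^ 3) 0 ->
     Un_cv (fun m => INR (q_part (n m) (k m)) / INR (p_part (n m) (k m))) 0).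
Proof.
split.
- intros Hinf.
  apply (Un_cv_dominated _ (fun m => / (INR (n m) / INR (k m) ^ 3))).
  + destruct (Hinf 2) as [N HN]; exists N; intros m Hm.
    apply PartitionCounting.ratio_near_one; [apply hk | left; apply HN; exact Hm].
  + exact (cv_infty_cv_0 _ Hinf).
- intros H0.
  set (f := fun t => 4 * (t + sqrt t)).
  apply (Un_cv_dominated _ (fun m => f (INR (n m) / INR (k m) ^ 3))).
  + exists 0%nat; intros m _; apply PartitionCounting.ratio_small; [apply hk | apply hn].
  + replace 0 with (f 0) by (unfold f; rewrite sqrt_0; ring).
    apply continuity_seq; [|exact H0].
    change (continuity_pt (mult_fct (fct_cte 4) (plus_fct id sqrt)) 0).
    apply continuity_pt_mult; [apply continuity_pt_const; now intros ? ?|].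
    apply continuity_pt_plus; [apply derivable_continuous_pt, derivable_pt_id|].
    apply continuity_pt_sqrt; lra.
Qed.
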